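(* Let $k$ be an infinite field with $\operatorname{char}k\neq 2$, let $a\in k\setminus k^2$, let $b_1,\dots,b_n\in k\setminus\{0\}$, and let $L_0=k(s_i,t_i:1\le i\le n)$ be a field extension of $k$ with $\operatorname{trdeg}_k(L_0)=n$ satisfying $s_i^2-at_i^2=b_i$ for $1\le i\le n$. Then $L_0$ is $k$-rational (respectively, stably $k$-rational, $k$-unirational) if and only if $(a,b_i)_{2,k}=0$ for all $1\le i\le n$.
   Context: A finitely generated field extension $L/k$ is $k$-rational if it is purely transcendental over $k$; stably $k$-rational if $L(y_1,\dots,y_m)$ is $k$-rational for some $y_1,\dots,y_m$ algebraically independent over $L$; $k$-unirational if $L$ is $k$-isomorphic to a subfield of a $k$-rational field. $(u,v)_{2,k}$ is the class in $\mathrm{Br}(k)$ of the quaternion algebra generated over $k$ by $U,V$ with $U^2=u$, $V^2=v$, $UV=-VU$; it is $0$ iff there exist $x,y\in k$ with $ux^2+vy^2=1$. *)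

From HB Require Import structures.
From mathcomp Require Import all_boot all_order all_algebra.
From mathcomp Require Import mpoly.
Set Implicit Arguments. Unset Strict Implicit. Unset Printing Implicit Defensive.
Import GRing.Theory.
Local Open Scope ring_scope.

(* A field extension L/k is given by a field L and a ring morphism
   iota : k -> L (automatically injective). *)

Definition alg_indep (k L : fieldType) (iota : k -> L) (m : nat)
  (x : 'I_m -> L) : Prop :=
  forall p : {mpoly k[m]}, p != 0 -> mmap iota x p != 0.

Definition in_gen_subfield (k L : fieldType) (iota : k -> L)
  (S : L -> Prop) (y : L) : Prop :=
  forall P : L -> Prop,
    (forall c, P (iota c)) -> (forall z, S z -> P z) ->
    (forall u v, P u -> P v -> P (u - v)) ->
    (forall u v, P u -> P v -> P (u * v)) ->
    (forall u, P u -> P u^-1) -> P y.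

Definition generates (k L : fieldType) (iota : k -> L) (S : L -> Prop) : Prop :=
  forall y : L, in_gen_subfield iota S y.

Definition range_of (L : Type) (m : nat) (x : 'I_m -> L) : L -> Prop :=
  fun z => exists i, z = x i.

Definition trdeg_eq (k L : fieldType) (iota : k -> L) (n : nat) : Prop :=
  (exists x : 'I_n -> L, alg_indep iota x) /\
  (forall y : 'I_n.+1 -> L, ~ alg_indep iota y).

Definition k_rational (k L : fieldType) (iota : k -> L) : Prop :=
  exists m (x : 'I_m -> L), alg_indep iota x /\ generates iota (range_of x).

Definition stably_k_rational (k L : fieldType) (iota : k -> L) : Prop :=
  exists (m : nat) (M : fieldType) (j : {rmorphism L -> M}) (y : 'I_m -> M),
    alg_indep j y /\ generates j (range_of y) /\ k_rational (j \o iota).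

Definition k_unirational (k L : fieldType) (iota : k -> L) : Prop :=
  exists (M : fieldType) (iotaM : k -> M) (f : {rmorphism L -> M}),
    k_rational iotaM /\ (forall c, f (iota c) = iotaM c).

(* (u,v)_{2,k} = 0 in Br(k), via the criterion given in the paper's context. *)
Definition quat_trivial (k : fieldType) (u v : k) : Prop :=
  exists x y : k, u * x ^+ 2 + v * y ^+ 2 = 1.

Definition infinite_field (k : fieldType) : Prop :=
  forall s : seq k, exists x : k, x \notin s.

From HB Require Import structures.
From mathcomp Require Import all_boot all_order all_algebra.
From mathcomp Require Import mpoly.
From mathcomp Require Import ring zify.
Import Order.TTheory GRing.Theory.
Local Open Scope ring_scope.

(* If every b_i = c_i^2 - a d_i^2 is a norm from k(sqrt a), the conic
   s^2 - a t^2 = b_i has the k-point (c_i, d_i), so (s_i, t_i) lies in k(u_i) for a single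
   u_i (project from that point); then L_0 = k(u_1, ..., u_n), and since trdeg L_0 = n a
   counting argument on polynomials of bounded degree shows the u_i are algebraically
   independent, i.e. L_0 is rational.  Conversely, if L_0 embeds into a purely
   transcendental k(y), clearing denominators gives A^2 - a B^2 = b_i C^2 in k[y] with
   C <> 0; comparing coefficients at the largest doubled leading monomial, and using that
   a is not a square, yields a norm equation for b_i over k.  Finally, over a field with
   a non-square a, (a, b)_{2,k} = 0 exactly when b is a norm from k(sqrt a). *)

Section GeneratedSubfield.
Context {k L : fieldType} {iota : {rmorphism k -> L}}.
Implicit Types (S : L -> Prop) (u v : L).

Lemma in_gen_subfieldS {S u} : S u -> in_gen_subfield iota S u.
Proof. by move=> Su P _ PS _ _ _; apply: PS. Qed.

Lemma in_gen_subfieldC {S} c : in_gen_subfield iota S (iota c).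
Proof. by move=> P Pk _ _ _ _; apply: Pk. Qed.

Lemma in_gen_subfieldB {S u v} : in_gen_subfield iota S u ->
  in_gen_subfield iota S v -> in_gen_subfield iota S (u - v).
Proof. by move=> Su Sv P Pk PS PB PM PV; apply: (PB); [apply: Su | apply: Sv]. Qed.

Lemma in_gen_subfieldM {S u v} : in_gen_subfield iota S u ->
  in_gen_subfield iota S v -> in_gen_subfield iota S (u * v).
Proof. by move=> Su Sv P Pk PS PB PM PV; apply: (PM); [apply: Su | apply: Sv]. Qed.

Lemma in_gen_subfieldV {S u} : in_gen_subfield iota S u -> in_gen_subfield iota S u^-1.
Proof. by move=> Su P Pk PS PB PM PV; apply: (PV); apply: Su. Qed.

Lemma in_gen_subfield1 {S} : in_gen_subfield iota S 1.
Proof. by rewrite -(rmorph1 iota); apply: in_gen_subfieldC. Qed.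

Lemma in_gen_subfieldD {S u v} : in_gen_subfield iota S u ->
  in_gen_subfield iota S v -> in_gen_subfield iota S (u + v).
Proof.
move=> Su Sv; rewrite -[v]opprK -[- v]sub0r -(rmorph0 iota).
by apply: in_gen_subfieldB => //; apply: in_gen_subfieldB => //; apply: in_gen_subfieldC.
Qed.

Lemma in_gen_subfield_trans {S S' y} : (forall z, S z -> in_gen_subfield iota S' z) ->
  in_gen_subfield iota S y -> in_gen_subfield iota S' y.
Proof.
move=> SS' Sy; apply: (Sy (in_gen_subfield iota S')) => // [c | u v | u v | u].
- exact: in_gen_subfieldC.
- exact: in_gen_subfieldB.
- exact: in_gen_subfieldM.
- exact: in_gen_subfieldV.
Qed.

Lemma generates_trans {S S'} : generates iota S ->
  (forall z, S z -> in_gen_subfield iota S' z) -> generates iota S'.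
Proof. by move=> genS SS' y; apply: in_gen_subfield_trans SS' (genS y). Qed.

Lemma in_gen_subfield_frac {m} {u : 'I_m -> L} {y} :
  in_gen_subfield iota (range_of u) y ->
  exists P Q : {mpoly k[m]}, mmap iota u Q != 0 /\ y = mmap iota u P / mmap iota u Q.
Proof.
have mmapC1 : mmap iota u 1 = 1 := rmorph1 _.
move=> uy; apply: (uy (fun y => exists P Q : {mpoly k[m]},
  mmap iota u Q != 0 /\ y = mmap iota u P / mmap iota u Q))
  => [c | _ [i ->] | _ _ [P1 [Q1 [Q1u ->]]] [P2 [Q2 [Q2u ->]]]
        | _ _ [P1 [Q1 [Q1u ->]]] [P2 [Q2 [Q2u ->]]] | _ [P [Q [Qu ->]]]].
- by exists c%:MP, 1; rewrite mmapC1 mmapC oner_neq0 divr1.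
- by exists 'X_i, 1; rewrite mmapX mmap1U mmapC1 oner_neq0 divr1.
- exists (P1 * Q2 - P2 * Q1), (Q1 * Q2); rewrite rmorphB !rmorphM mulf_neq0 //.
  by split=> //; field; rewrite Q1u Q2u.
- exists (P1 * P2), (Q1 * Q2); rewrite !rmorphM mulf_neq0 //.
  by split=> //; field; rewrite Q1u Q2u.
- have [Pu0 | Pu] := eqVneq (mmap iota u P) 0.
    by exists 0, 1; rewrite Pu0 rmorph0 mmapC1 oner_neq0 !mul0r invr0.
  by exists Q, P; rewrite invf_div.
Qed.

End GeneratedSubfield.

Section BoxedPolynomials.
Context {k : fieldType} {n : nat}.
Implicit Types p q : {mpoly k[n]}.

Definition boxed N p := forall mn, mn \in msupp p -> forall i, (mn i <= N)%N.

Lemma boxedW {N N' p} : (N <= N')%N -> boxed N p -> boxed N' p.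
Proof. by move=> leNN' bp mn /bp bmn i; apply: leq_trans leNN'. Qed.

Lemma boxed_msize p : boxed (msize p) p.
Proof.
move=> mn /msize_mdeg_lt mn_lt i; apply: ltnW; apply: leq_ltn_trans mn_lt.
by rewrite mdegE (bigD1 i) //= leq_addr.
Qed.

Lemma boxed0 N : boxed N 0.
Proof. by move=> mn; rewrite msupp0. Qed.

Lemma boxed1 N : boxed N 1.
Proof. by move=> mn; rewrite msupp1 inE => /eqP -> i; rewrite mnm0E. Qed.

Lemma boxedX {N} (mn : 'X_{1..n}) : (forall i, mn i <= N)%N -> boxed N 'X_[mn].
Proof. by move=> bmn mn'; rewrite msuppX inE => /eqP ->. Qed.

Lemma boxedD {N p q} : boxed N p -> boxed N q -> boxed N (p + q).
Proof. by move=> bp bq mn /msuppD_le; rewrite mem_cat => /orP[/bp | /bq]. Qed.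

Lemma boxedZ {N} c {p} : boxed N p -> boxed N (c *: p).
Proof. by move=> bp mn /msuppZ_le /bp. Qed.

Lemma boxedM {N N' p q} : boxed N p -> boxed N' q -> boxed (N + N') (p * q).
Proof.
move=> bp bq mn /msuppM_le /allpairsP[[m1 m2] /= [/bp b1 /bq b2 ->]] i.
by rewrite mnmDE leq_add.
Qed.

Lemma boxedXn {N p} e : boxed N p -> boxed (N * e) (p ^+ e).
Proof.
move=> bp; elim: e => [|e IHe]; first by rewrite expr0; apply: boxed1.
by rewrite exprS mulnS; apply: boxedM.
Qed.

Lemma boxed_sum {I : finType} {N} {F : I -> {mpoly k[n]}} :
  (forall i, boxed N (F i)) -> boxed N (\sum_i F i).
Proof. by move=> bF; elim/big_rec: _ => [|i p _]; [apply: boxed0 | apply: boxedD]. Qed.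

Lemma boxed_prod {I : finType} {N : I -> nat} {F : I -> {mpoly k[n]}} :
  (forall i, boxed (N i) (F i)) -> boxed (\sum_i N i) (\prod_i F i).
Proof. by move=> bF; elim/big_rec2: _ => [|i N' p _]; [apply: boxed1 | apply: boxedM]. Qed.

Definition box_mnm {N} (w : {ffun 'I_n -> 'I_N}) : 'X_{1..n} := [multinom (w i : nat) | i < n].

Lemma box_mnm_inj {N} : injective (@box_mnm N).
Proof.
by move=> w1 w2 /mnmP eq_w; apply/ffunP => i; apply: val_inj; have := eq_w i; rewrite !mnmE.
Qed.

Lemma boxed_box_mnm {N} (w : {ffun 'I_n -> 'I_N.+1}) : boxed N 'X_[box_mnm w].
Proof. by apply: boxedX => i; rewrite mnmE -ltnS. Qed.

Lemma boxed_eq0 N p : boxed N p ->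
  (forall w : {ffun 'I_n -> 'I_N.+1}, p@_(box_mnm w) = 0) -> p = 0.
Proof.
move=> bp p0; apply/mpolyP => mn; rewrite mcoeff0.
have [/bp bmn | /memN_msupp_eq0 //] := boolP (mn \in msupp p).
suff -> : mn = box_mnm [ffun i => inord (mn i) : 'I_N.+1] by apply: p0.
by apply/mnmP => i; rewrite mnmE ffunE inordK // ltnS bmn.
Qed.

Lemma mcoeff_sum_box_mnm {N} (c : {ffun 'I_n -> 'I_N} -> k) w :
  (\sum_w' c w' *: 'X_[box_mnm w'])@_(box_mnm w) = c w.
Proof.
rewrite -/(mcoeff _ _) raddf_sum (bigD1 w) //= mcoeffZ mcoeffX eqxx mulr1.
rewrite big1 ?addr0 // => w' nw'; rewrite mcoeffZ mcoeffX (inj_eq box_mnm_inj).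
by rewrite (negbTE nw') mulr0.
Qed.

Lemma boxed_lin_dep (I : finType) N (R : I -> {mpoly k[n]}) :
  (N.+1 ^ n < #|I|)%N -> (forall i, boxed N (R i)) ->
  exists2 v : {ffun I -> k}, v != 0 & \sum_i v i *: R i = 0.
Proof.
move=> ltNI bR; pose W := {ffun 'I_n -> 'I_N.+1}.
pose A := \matrix_(r < #|I|, j < #|W|) (R (enum_val r))@_(box_mnm (enum_val j)).
have [w w_ker w0] : exists2 w : 'rV_#|I|, (w <= kermx A)%MS & w != 0.
  apply/rowV0Pn; rewrite kermx_eq0; apply: contraTN ltNI => /eqP <-.
  by rewrite -leqNgt (leq_trans (rank_leq_col A)) // card_ffun !card_ord.
have wA0 : w *m A = 0 by apply/sub_kermxP.
exists [ffun i => w 0 (enum_rank i)].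
  apply: contraNneq w0 => /ffunP v0; apply/eqP/rowP => r.
  by have := v0 (enum_val r); rewrite !ffunE enum_valK mxE.
apply: (boxed_eq0 N) => [|wn]; first by apply: boxed_sum => i; apply: boxedZ.
have := congr1 (fun B : 'M_(1, #|W|) => B 0 (enum_rank wn)) wA0; rewrite !mxE => <-.
rewrite -/(mcoeff _ _) raddf_sum [RHS](reindex enum_rank) /=; last first.
  by apply: onW_bij; apply: enum_rank_bij.
by apply: eq_bigr => i _; rewrite mcoeffZ ffunE mxE !enum_rankK.
Qed.

End BoxedPolynomials.

Lemma expnD_leq m A e : ((A + e) ^ m <= A ^ m + m * e * (A + e) ^ m.-1)%N.
Proof.
elim: m => [|m IHm]; first by rewrite !expn0 mul0n addn0.
rewrite [((A + e) ^ m.+1)%N]expnS [(A ^ m.+1)%N]expnS.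
apply: leq_trans (leq_mul (leqnn (A + e)) IHm) _.
case: m {IHm} => [|m] /=; first by rewrite !expn0; lia.
have : (A ^ m.+1 <= (A + e) ^ m.+1)%N by rewrite leq_exp2r ?leq_addr.
rewrite [((A + e) ^ m.+1)%N]expnS; set X := (A ^ m.+1)%N; set Y := ((A + e) ^ m)%N.
nia.
Qed.

Lemma box_count_lt m c e :
  exists D, ((m * c * D + e + 1) ^ m < (D + 1) ^ m + (m * c * D + 1) ^ m)%N.
Proof.
case: m => [|m]; first by exists 0.
have leq_expn a b j : (a <= b -> a ^ j <= b ^ j)%N.
  by move=> le_ab; elim: j => // j IHj; rewrite !expnS leq_mul.
pose K := (m.+1 * c + e + 1)%N; pose D := (m.+1 * e * K ^ m)%N; exists D.
rewrite addnAC; set X := (m.+1 * c * D + 1)%N.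
have XeK : (X + e <= K * (D + 1))%N by rewrite /X /K; nia.
have := leq_expn _ _ m XeK; have := expnD_leq m.+1 X e.
have : (0 < (D + 1) ^ m)%N by rewrite expn_gt0 addn1.
rewrite expnMn [((D + 1) ^ m.+1)%N]expnS /= /D.
set Y := ((_ + 1) ^ m)%N; set Z := ((X + e) ^ m)%N; set Km := (K ^ m)%N.
nia.
Qed.

Definition cleared_mnm {k : fieldType} {n : nat} (P Q : 'I_n -> {mpoly k[n]}) D
  (al : 'I_n -> nat) := \prod_j (P j ^+ al j * Q j ^+ (D - al j)).

Section ClearedMonomials.
Context {k : fieldType} {n c : nat} {P Q : 'I_n -> {mpoly k[n]}}.
Hypotheses (bP : forall j, boxed c (P j)) (bQ : forall j, boxed c (Q j)).

Lemma boxed_cleared_mnm D (al : {ffun 'I_n -> 'I_D.+1}) :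
  boxed (n * c * D) (cleared_mnm P Q D (fun j => al j)).
Proof.
have := boxed_prod (fun j => boxedM (boxedXn (al j) (bP j)) (boxedXn (D - al j) (bQ j))).
congr boxed; rewrite (eq_bigr (fun _ => c * D)%N) ?sum_nat_const ?card_ord ?mulnA //.
by move=> j _; rewrite -mulnDr subnKC // -ltnS.
Qed.

(* The (D + 1)^n cleared monomials and the (n c D + 1)^n multiples F X^ga all have
   exponents at most n c D + msize F, and [box_count_lt] makes them outnumber such monomials. *)
Lemma cleared_mnm_dependent {F} : F != 0 ->
  exists D (lam : {ffun {ffun 'I_n -> 'I_D.+1} -> k}) g,
    lam != 0 /\ \sum_al lam al *: cleared_mnm P Q D (fun j => al j) = F * g.
Proof.
move=> F0; have [D count] := box_count_lt n c (msize F).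
pose S := {ffun 'I_n -> 'I_D.+1}; pose T := {ffun 'I_n -> 'I_(n * c * D).+1}.
pose R (x : S + T) := match x with
  | inl al => cleared_mnm P Q D (fun j => al j) | inr ga => F * 'X_[box_mnm ga] end.
have [|x|v v0 Rv0] := @boxed_lin_dep _ _ _ (n * c * D + msize F) R.
- by move: count; rewrite card_sum !card_ffun !card_ord !addn1.
- case: x => [al | ga] /=; first exact: boxedW (leq_addr _ _) (boxed_cleared_mnm D al).
  by rewrite addnC; apply: boxedM (boxed_msize F) (boxed_box_mnm ga).
pose g := \sum_ga v (inr ga) *: 'X_[box_mnm ga].
have Fg : \sum_ga v (inr ga) *: (F * 'X_[box_mnm ga]) = F * g.
  by rewrite mulr_sumr; apply: eq_bigr => ga _; rewrite scalerAr.
rewrite big_sumType /= Fg in Rv0.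
exists D, [ffun al => v (inl al)], (- g); split; last first.
  rewrite mulrN; apply/eqP; rewrite -addr_eq0; apply/eqP; rewrite -[RHS]Rv0.
  by congr (_ + _); apply: eq_bigr => al _; rewrite ffunE.
apply: contraNneq v0 => /ffunP lam0.
have /eqP : F * g = 0.
  rewrite -[RHS]Rv0 big1 ?add0r // => al _.
  by have := lam0 al; rewrite !ffunE => ->; rewrite scale0r.
rewrite mulf_eq0 (negbTE F0) /= => /eqP g0.
apply/eqP/ffunP => -[al | ga]; first by have := lam0 al; rewrite !ffunE.
by rewrite ffunE -(mcoeff_sum_box_mnm (fun ga => v (inr ga))) -/g g0 mcoeff0.
Qed.

End ClearedMonomials.

Section Transcendence.
Context {k L : fieldType} {iota : {rmorphism k -> L}}.

Lemma mmap_cleared_mnm {m} {u y : 'I_m -> L} {P Q : 'I_m -> {mpoly k[m]}} {D}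
    {al : 'I_m -> nat} :
  (forall j, mmap iota u (Q j) != 0) ->
  (forall j, y j = mmap iota u (P j) / mmap iota u (Q j)) -> (forall j, al j <= D)%N ->
  mmap iota u (cleared_mnm P Q D al) = (\prod_j y j ^+ al j) * \prod_j mmap iota u (Q j) ^+ D.
Proof.
move=> Qu0 yE alD; rewrite rmorph_prod -big_split; apply: eq_bigr => j _ /=.
rewrite rmorphM !rmorphXn yE -{2}(subnKC (alD j)) exprD expr_div_n mulrA divfK //.
exact: expf_neq0.
Qed.

Lemma generators_alg_indep {m} {u y : 'I_m -> L} :
  generates iota (range_of u) -> alg_indep iota y -> alg_indep iota u.
Proof.
move=> gen_u indep_y F F0; apply/eqP => Fu0.
have /fin_all_exists[PQ PQu] : forall j, exists PQ : {mpoly k[m]} * {mpoly k[m]},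
    mmap iota u PQ.2 != 0 /\ y j = mmap iota u PQ.1 / mmap iota u PQ.2.
  by move=> j; have [P [Q PQu]] := in_gen_subfield_frac (gen_u (y j)); exists (P, Q).
pose P j := (PQ j).1; pose Q j := (PQ j).2.
pose c := \max_j maxn (msize (P j)) (msize (Q j)).
have le_c j : (maxn (msize (P j)) (msize (Q j)) <= c)%N.
  exact: (@leq_bigmax _ (fun j => maxn (msize (P j)) (msize (Q j))) j).
have bP j : boxed c (P j) := boxedW (leq_trans (leq_maxl _ _) (le_c j)) (boxed_msize _).
have bQ j : boxed c (Q j) := boxedW (leq_trans (leq_maxr _ _) (le_c j)) (boxed_msize _).
have [D [lam [g [lam0 lamFg]]]] := cleared_mnm_dependent bP bQ F0.
pose G := \sum_w lam w *: 'X_[box_mnm w].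
have G0 : G != 0.
  apply: contraNneq lam0 => G0; apply/eqP/ffunP => w.
  by rewrite -(mcoeff_sum_box_mnm lam w) -/G G0 mcoeff0 ffunE.
have Qu0 : \prod_j mmap iota u (Q j) ^+ D != 0.
  by apply/prodf_neq0 => j _; rewrite expf_neq0 // (PQu j).1.
(* G(y) times the common denominator is the value at u of the multiple F g of F. *)
have /eqP := indep_y G G0; apply; apply: (mulIf Qu0); rewrite mul0r.
have <- : mmap iota u (F * g) = 0 by rewrite rmorphM /= Fu0 mul0r.
rewrite -lamFg !rmorph_sum mulr_suml /=.
apply: eq_bigr => w _; rewrite !mmapZ mmapX -mulrA.
rewrite (mmap_cleared_mnm (fun j => (PQu j).1) (fun j => (PQu j).2)) => [|j].
  by rewrite /mmap1; congr (_ * (_ * _)); apply: eq_bigr => j _; rewrite mnmE.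
by rewrite -ltnS.
Qed.

End Transcendence.

Section Norms.
Context {k : fieldType}.

Definition is_norm (a b : k) := exists c d : k, c ^+ 2 - a * d ^+ 2 = b.

Lemma quat_trivial_normP {a b : k} : (2%:R : k) != 0 -> (forall c, c ^+ 2 != a) ->
  b != 0 -> quat_trivial a b <-> is_norm a b.
Proof.
move=> two0 a_nsq b0; have a0 : a != 0 by have := a_nsq 0; rewrite expr0n eq_sym.
split=> [[x [y axby1]] | [s [t stb]]].
  have y0 : y != 0.
    apply: contraNneq (a_nsq x^-1) => y0.
    have ax1 : a * x ^+ 2 = 1 by rewrite -axby1 y0 expr0n mulr0 addr0.
    have x0 : x != 0.
      by apply: contraTneq (oner_neq0 k) => x0; rewrite -ax1 x0 expr0n mulr0 eqxx.
    by apply/eqP/(mulIf (expf_neq0 2 x0)); rewrite exprVn mulVf ?expf_neq0 // ax1.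
  have -> : b = (1 - a * x ^+ 2) / y ^+ 2 by rewrite -axby1; field.
  by exists y^-1, (x / y); field.
have [s0 | s0] := eqVneq s 0.
  have t0 : t != 0 by apply: contraNneq b0 => t0; rewrite -stb s0 t0 expr0n mulr0 subr0.
  (* Here b = -a t^2; the witness solves x - t y = 1, x + t y = 1/a. *)
  exists ((1 + a^-1) / 2%:R), ((1 - a^-1) / (2%:R * t)); rewrite -stb s0; field.
  by rewrite t0 a0 two0.
by exists (t / s), s^-1; rewrite -stb; field.
Qed.

Lemma mpoly_norm_eq {m} {a b : k} {A B C : {mpoly k[m]}} : (forall c, c ^+ 2 != a) ->
  C != 0 -> A ^+ 2 - a *: B ^+ 2 = b *: C ^+ 2 -> is_norm a b.
Proof.
move=> a_nsq C0 ABC.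
(* Compare coefficients at the largest of the doubled leading monomials: the leading
   coefficients that reach it cannot all cancel, since a is not a square. *)
pose mu := Order.max (Order.max (mlead A *+ 2)%MM (mlead B *+ 2)%MM) (mlead C *+ 2)%MM.
pose v (p : {mpoly k[m]}) := if (mlead p *+ 2)%MM == mu then mleadc p else 0.
have mcoeff_sqr p : ((mlead p *+ 2)%MM <= mu)%O -> (p ^+ 2)@_mu = v p ^+ 2.
  rewrite /v; case: eqP => [<- _ | ne le]; first by rewrite mleadcX.
  rewrite expr0n /=; apply: mcoeff_gt_mlead; apply: le_lt_trans (mleadX_le p 2) _.
  by rewrite lt_neqAle le andbT; apply/eqP.
have vABC : v A ^+ 2 - a * v B ^+ 2 = b * v C ^+ 2.
  have := congr1 (mcoeff mu) ABC; rewrite mcoeffB !mcoeffZ -/(mcoeff _ _).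
  by rewrite !mcoeff_sqr // /mu !le_max lexx ?orbT.
have [vC0 | vC0] := eqVneq (v C) 0; last first.
  by exists (v A / v C), (v B / v C); rewrite !expr_div_n mulrA -mulrBl vABC mulfK ?expf_neq0.
have vB0 : v B = 0.
  apply/eqP; apply: contraTT (a_nsq (v A / v B)) => vB0; rewrite negbK expr_div_n.
  move: vABC; rewrite vC0 expr0n mulr0 => /eqP; rewrite subr_eq0 => /eqP ->.
  by rewrite mulfK ?expf_neq0.
have vA0 : v A = 0.
  by move: vABC; rewrite vB0 vC0 expr0n /= !mulr0 subr0 => /eqP; rewrite expf_eq0 => /andP[_ /eqP].
have p_eq0 p : v p = 0 -> (mlead p *+ 2)%MM = mu -> p = 0.
  move=> vp0 mu_p; move: vp0; rewrite /v mu_p eqxx => /eqP.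
  by rewrite mleadc_eq0 => /eqP.
have mu_neq0 : mu != 0%MM.
  apply: contraNneq C0 => mu0; apply/eqP/(p_eq0 C vC0)/eqP.
  by rewrite eq_le {2}mu0 le0m andbT /mu le_max lexx orbT.
have mlead0X2 : (mlead (0 : {mpoly k[m]}) *+ 2)%MM = 0%MM.
  by apply/mnmP => i; rewrite mlead0 mulmnE mnm0E.
have : mu = (mlead A *+ 2)%MM \/ mu = (mlead B *+ 2)%MM \/ mu = (mlead C *+ 2)%MM.
  by rewrite /mu !maxEle; do 2!case: ifP; auto.
case=> [muA | [muB | muC]]; last by move: C0; rewrite (p_eq0 C vC0 (esym muC)) eqxx.
- by move: mu_neq0; rewrite muA (p_eq0 A vA0 (esym muA)) mlead0X2 eqxx.
- by move: mu_neq0; rewrite muB (p_eq0 B vB0 (esym muB)) mlead0X2 eqxx.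
Qed.

End Norms.

Lemma norm1_rational_param {L : fieldType} {A x y : L} : (2%:R : L) != 0 ->
  x ^+ 2 - A * y ^+ 2 = 1 -> x + 1 != 0 ->
  exists2 u, x = (1 + A * u ^+ 2) / (1 - A * u ^+ 2) & y = u * (x + 1).
Proof.
move=> two0 xy1 x1; exists (y / (x + 1)); last by rewrite divfK.
set u := y / (x + 1); have yE : y = u * (x + 1) by rewrite divfK.
have xE : (1 - A * u ^+ 2) * x = 1 + A * u ^+ 2.
  have xy10 : x ^+ 2 - A * y ^+ 2 - 1 = 0 by rewrite xy1 subrr.
  apply: (mulIf x1); apply/eqP; rewrite -subr_eq0 -xy10 yE; apply/eqP; ring.
have den0 : 1 - A * u ^+ 2 != 0.
  apply: contraNneq two0 => den0; have Au1 : A * u ^+ 2 = 1.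
    by apply/eqP; rewrite eq_sym -subr_eq0 den0.
  by rewrite mulr2n -{2}Au1 -xE den0 mul0r.
by rewrite -xE mulrC mulKf.
Qed.

Lemma conic_in_gen_subfield {k L : fieldType} (iota : {rmorphism k -> L}) {a b : k} {s t : L} :
  (2%:R : k) != 0 -> b != 0 -> is_norm a b -> s ^+ 2 - iota a * t ^+ 2 = iota b ->
  exists u, in_gen_subfield iota (fun z => z = u) s /\ in_gen_subfield iota (fun z => z = u) t.
Proof.
move=> two0 b0 [c [d cdb]] st; set A := iota a in st *; set B := iota b in st *.
have two0L : (2%:R : L) != 0 by rewrite -(rmorph_nat iota) fmorph_eq0.
have B0 : B != 0 by rewrite fmorph_eq0.
(* Dividing by the rational point (c, d) sends (s, t) to a point (x, y) of x^2 - a y^2 = 1;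
   projecting from (-1, 0) needs x <> -1, which fixes the sign of (c, d). *)
wlog x1 : c d cdb / (s * iota c - A * t * iota d) / B + 1 != 0.
  move=> gen; have [x1 | x1] := eqVneq ((s * iota c - A * t * iota d) / B + 1) 0;
    last exact: gen x1.
  apply: (gen (- c) (- d)); first by rewrite !sqrrN.
  have -> : (s * iota (- c) - A * t * iota (- d)) / B = - ((s * iota c - A * t * iota d) / B).
    by rewrite !rmorphN; field.
  have -> : (s * iota c - A * t * iota d) / B = -1 by apply/eqP; rewrite -addr_eq0 x1.
  by rewrite opprK -mulr2n.
have CD : iota c ^+ 2 - A * iota d ^+ 2 = B.
  by rewrite /B -cdb rmorphB rmorphXn rmorphM rmorphXn.
set x := (s * iota c - A * t * iota d) / B; set y := (t * iota c - s * iota d) / B.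
have xy1 : x ^+ 2 - A * y ^+ 2 = 1.
  by rewrite -(divff B0) -{1}st /x /y -CD; field; rewrite CD.
have sE : s = x * iota c + A * y * iota d by rewrite /x /y -CD; field; rewrite CD.
have tE : t = x * iota d + y * iota c by rewrite /x /y -CD; field; rewrite CD.
have [u xE yE] := norm1_rational_param two0L xy1 x1.
exists u.
pose Ku := in_gen_subfield iota (fun z => z = u).
have Ku_u : Ku u by apply: in_gen_subfieldS.
have Ku_A : Ku A by apply: in_gen_subfieldC.
have Ku_Au2 : Ku (A * u ^+ 2) by rewrite expr2; do 2!apply: in_gen_subfieldM => //.
have Ku_x : Ku x.
  by rewrite xE; apply: in_gen_subfieldM; last apply: in_gen_subfieldV;
    [apply: in_gen_subfieldD | apply: in_gen_subfieldB] => //; apply: in_gen_subfield1.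
have Ku_y : Ku y.
  rewrite yE; apply: in_gen_subfieldM => //.
  by apply: in_gen_subfieldD => //; apply: in_gen_subfield1.
rewrite sE tE; split; apply: in_gen_subfieldD; apply: in_gen_subfieldM => //;
  by [apply: in_gen_subfieldM | apply: in_gen_subfieldC].
Qed.

Section Rationality.
Context {k : fieldType}.

Lemma eq_k_rational {M : fieldType} (iota1 iota2 : k -> M) :
  iota1 =1 iota2 -> k_rational iota1 -> k_rational iota2.
Proof.
move=> eq_iota [m [y [indep_y gen_y]]]; exists m, y; split.
  move=> p p0; suff -> : mmap iota2 y p = mmap iota1 y p by apply: indep_y.
  by apply: eq_bigr => mn _; rewrite eq_iota.
by move=> z P Pk; apply: gen_y => c; rewrite eq_iota.
Qed.

Lemma rational_stably_rational {L : fieldType} (iota : k -> L) :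
  k_rational iota -> stably_k_rational iota.
Proof.
move=> rat; exists 0, L, idfun, (fun=> 0); split; last split => //.
- by move=> p; rewrite (nvar0_mpolyC p) mmapC mpolyC_eq0.
- by move=> y P Pk _ _ _ _; apply: (Pk y).
Qed.

Lemma stably_rational_unirational {L : fieldType} (iota : k -> L) :
  stably_k_rational iota -> k_unirational iota.
Proof. by move=> [m [M [j [y [_ [_ rat]]]]]]; exists M, (j \o iota), j. Qed.

Lemma rational_conic_norm {M : fieldType} (iota : {rmorphism k -> M}) (a b : k) (s t : M) :
  (forall c, c ^+ 2 != a) -> k_rational iota -> s ^+ 2 - iota a * t ^+ 2 = iota b ->
  is_norm a b.
Proof.
move=> a_nsq [m [y [indep_y gen_y]]] st.
have [P1 [Q1 [Q1y sE]]] := in_gen_subfield_frac (gen_y s).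
have [P2 [Q2 [Q2y tE]]] := in_gen_subfield_frac (gen_y t).
have Q0 : Q1 * Q2 != 0.
  by apply: contraNneq (mulf_neq0 Q1y Q2y) => Q0; rewrite -rmorphM Q0 rmorph0.
pose E := (P1 * Q2) ^+ 2 - a *: (P2 * Q1) ^+ 2 - b *: (Q1 * Q2) ^+ 2.
have E0 : mmap iota y E = 0.
  have -> : mmap iota y E =
      (mmap iota y Q1 * mmap iota y Q2) ^+ 2 * (s ^+ 2 - iota a * t ^+ 2 - iota b).
    by rewrite /E sE tE !rmorphB /= !mmapZ !rmorphXn !rmorphM /=; field; apply/andP.
  by rewrite st subrr mulr0.
apply: (mpoly_norm_eq a_nsq Q0 (A := P1 * Q2) (B := P2 * Q1)); apply/eqP; rewrite -subr_eq0.
by apply/negPn/negP => /indep_y; rewrite E0 eqxx.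
Qed.

Lemma unirational_conic_norm {L : fieldType} (iota : {rmorphism k -> L}) (a b : k) (s t : L) :
  (forall c, c ^+ 2 != a) -> k_unirational iota -> s ^+ 2 - iota a * t ^+ 2 = iota b ->
  is_norm a b.
Proof.
move=> a_nsq [M [iotaM [f [ratM fE]]]] st.
apply: (rational_conic_norm (f \o iota : {rmorphism k -> M}) a b (f s) (f t) a_nsq).
  by apply: eq_k_rational ratM => c; rewrite /= fE.
by rewrite /= -!rmorphXn -rmorphM -rmorphB st.
Qed.

Lemma conic_norms_rational {L : fieldType} (iota : {rmorphism k -> L}) {n} {a : k}
    {b : 'I_n -> k} {s t : 'I_n -> L} :
  (2%:R : k) != 0 -> (forall i, b i != 0) ->
  generates iota (fun z => exists i, z = s i \/ z = t i) ->
  (exists x : 'I_n -> L, alg_indep iota x) ->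
  (forall i, s i ^+ 2 - iota a * t i ^+ 2 = iota (b i)) ->
  (forall i, is_norm a (b i)) -> k_rational iota.
Proof.
move=> two0 b0 gen_st [x indep_x] st norm_b.
have /fin_all_exists[u st_u] i := conic_in_gen_subfield iota two0 (b0 i) (norm_b i) (st i).
have gen_u : generates iota (range_of u).
  apply: (generates_trans gen_st) => _ [i [->|->]];
    [case: (st_u i) => + _ | case: (st_u i) => _];
    by apply: in_gen_subfield_trans => _ ->; apply: in_gen_subfieldS; exists i.
by exists n, u; split; first exact: generators_alg_indep gen_u indep_x.
Qed.

End Rationality.

Theorem theorem2p7 (k L : fieldType) (iota : {rmorphism k -> L}) (n : nat)
  (a : k) (b : 'I_n -> k) (s t : 'I_n -> L) :
  infinite_field k ->
  (2%:R : k) != 0 ->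
  (forall c : k, c ^+ 2 != a) ->
  (forall i, b i != 0) ->
  generates iota (fun z => exists i, z = s i \/ z = t i) ->
  trdeg_eq iota n ->
  (forall i, s i ^+ 2 - iota a * t i ^+ 2 = iota (b i)) ->
  (k_rational iota <-> (forall i, quat_trivial a (b i))) /\
  (stably_k_rational iota <-> (forall i, quat_trivial a (b i))) /\
  (k_unirational iota <-> (forall i, quat_trivial a (b i))).
Proof.
move=> _ two0 a_nsq b0 gen_st [indep _] st.
have quatE : (forall i, quat_trivial a (b i)) <-> (forall i, is_norm a (b i)).
  by split=> h i; apply/(quat_trivial_normP two0 a_nsq (b0 i)).
have rat_stab := rational_stably_rational iota.
have stab_unirat := stably_rational_unirational iota.
have unirat_norm : k_unirational iota -> forall i, is_norm a (b i).
  by move=> unirat i; apply: unirational_conic_norm a_nsq unirat (st i).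
have norm_rat := conic_norms_rational iota two0 b0 gen_st indep st.
rewrite quatE; split; [|split]; split; auto.
Qed.
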